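(* Let $(X,d)$ be a complete $\mathrm{CAT}(0)$-space and $f:X\to\mathbb{R}$ a lower semi-continuous quasi-convex function. Assume in addition that either (1) $\inf_X f>-\infty$, or (2) $f$ is $\lambda$-convex for some $\lambda<0$. Then for every $x\in X$ and every $\tau>0$ (with $\tau<(-\lambda)^{-1}$ in case (2)), the set $\mathcal J^f_\tau(x)$ is nonempty. Moreover, in case (2) with $\tau<(-\lambda)^{-1}$, $\mathcal J^f_\tau(x)$ consists of exactly one point.
   Context: A metric space is geodesic if any two points $x,y$ are joined by a curve $\gamma:[0,1]\to X$ with $\gamma(0)=x$, $\gamma(1)=y$, $d(\gamma(s),\gamma(t))=|t-s|d(x,y)$ (a minimal geodesic). A geodesic metric space $(X,d)$ is a $\mathrm{CAT}(0)$-space if for all $x,y,z\in X$ and every minimal geodesic $\gamma$ from $y$ to $z$, $d^2(x,\gamma(s))\le(1-s)d^2(x,y)+sd^2(x,z)-(1-s)sd^2(y,z)$ for all $s\in[0,1]$; then minimal geodesics are unique, denoted $\gamma_{xy}$. $f$ is quasi-convex if $f(\gamma_{xy}(s))\le\max\{f(x),f(y)\}$ for all $x,y\in X$, $s\in(0,1)$; $f$ is $\lambda$-convex if $f(\gamma_{xy}(s))\le(1-s)f(x)+sf(y)-\frac{\lambda}{2}(1-s)sd^2(x,y)$ for all $x,y$, $s\in(0,1)$. For $\tau>0$, $f_\tau(x):=\inf_{z\in X}\{f(z)+d^2(x,z)/(2\tau)\}$ and $\mathcal J^f_\tau(x):=\{z\in X: f(z)+d^2(x,z)/(2\tau)=f_\tau(x)\}$.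 *)

From Stdlib Require Import Reals Lra.
Open Scope R_scope.

Definition is_metric {X : Type} (d : X -> X -> R) : Prop :=
  (forall x y, 0 <= d x y) /\
  (forall x y, d x y = 0 <-> x = y) /\
  (forall x y, d x y = d y x) /\
  (forall x y z, d x z <= d x y + d y z).

Definition is_cauchy {X : Type} (d : X -> X -> R) (u : nat -> X) : Prop :=
  forall eps, 0 < eps -> exists N, forall m n, (N <= m)%nat -> (N <= n)%nat ->
    d (u m) (u n) < eps.

Definition converges_to {X : Type} (d : X -> X -> R) (u : nat -> X) (l : X) : Prop :=
  forall eps, 0 < eps -> exists N, forall n, (N <= n)%nat -> d (u n) l < eps.

Definition complete {X : Type} (d : X -> X -> R) : Prop :=
  forall u : nat -> X, is_cauchy d u -> exists l, converges_to d u l.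

(* gamma : [0,1] -> X (represented on R, only values on [0,1] matter) is a
   minimal geodesic from x to y. *)
Definition min_geodesic {X : Type} (d : X -> X -> R) (x y : X) (gamma : R -> X) : Prop :=
  gamma 0 = x /\ gamma 1 = y /\
  forall s t, 0 <= s <= 1 -> 0 <= t <= 1 ->
    d (gamma s) (gamma t) = Rabs (t - s) * d x y.

Definition geodesic_space {X : Type} (d : X -> X -> R) : Prop :=
  forall x y, exists gamma, min_geodesic d x y gamma.

Definition CAT0 {X : Type} (d : X -> X -> R) : Prop :=
  geodesic_space d /\
  forall x y z gamma, min_geodesic d y z gamma ->
    forall s, 0 <= s <= 1 ->
      (d x (gamma s))^2 <= (1 - s) * (d x y)^2 + s * (d x z)^2
                           - (1 - s) * s * (d y z)^2.

Definition lsc {X : Type} (d : X -> X -> R) (f : X -> R) : Prop :=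
  forall x eps, 0 < eps -> exists delta, 0 < delta /\
    forall y, d x y < delta -> f x - eps < f y.

(* Quasi-convexity along the (unique, in CAT(0)) minimal geodesics. *)
Definition quasi_convex {X : Type} (d : X -> X -> R) (f : X -> R) : Prop :=
  forall x y gamma, min_geodesic d x y gamma ->
    forall s, 0 < s < 1 -> f (gamma s) <= Rmax (f x) (f y).

Definition lambda_convex {X : Type} (d : X -> X -> R) (lam : R) (f : X -> R) : Prop :=
  forall x y gamma, min_geodesic d x y gamma ->
    forall s, 0 < s < 1 ->
      f (gamma s) <= (1 - s) * f x + s * f y - lam / 2 * (1 - s) * s * (d x y)^2.

Definition J_tau {X : Type} (d : X -> X -> R) (f : X -> R) (tau : R) (x z : X) : Prop :=
  forall w, f z + (d x z)^2 / (2 * tau) <= f w + (d x w)^2 / (2 * tau).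

From Stdlib Require Import Reals Lra Psatz IndefiniteDescription Classical.
Open Scope R_scope.

(* The objective g y := f y + d(x,y)^2/(2 tau) is lower semicontinuous, and the CAT(0)
   inequality at the midpoint p of y and z gives
     g p <= (g y + g z)/2 - (lam + 1/tau) d(y,z)^2/8                    if f is lam-convex,
     g p <= (g y + g z)/2 + |f y - f z|/2 - d(y,z)^2/(8 tau)            if f is quasi-convex.
   As g p is at least inf g, minimizing sequences are Cauchy (in the quasi-convex case
   after passing to a subsequence along which the bounded values of f converge), and by
   completeness and lower semicontinuity their limit minimizes g.  In the lam-convex case
   the same estimate applied to two minimizers makes them coincide, and g is bounded below
   because f has a quadratic minorant b - a d(x,y) + lam/2 d(x,y)^2. *)

Definition inv_succ (n : nat) : R := / (INR n + 1).

Lemma inv_succ_pos n : 0 < inv_succ n.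
Proof. unfold inv_succ; pose proof (pos_INR n); apply Rinv_0_lt_compat; lra. Qed.

Lemma inv_succ_le_1 n : inv_succ n <= 1.
Proof.
  unfold inv_succ; pose proof (pos_INR n); rewrite <- Rinv_1.
  apply Rinv_le_contravar; lra.
Qed.

Lemma inv_succ_le n k : (n <= k)%nat -> inv_succ k <= inv_succ n.
Proof.
  intros Hnk; unfold inv_succ; pose proof (pos_INR n); apply le_INR in Hnk.
  apply Rinv_le_contravar; lra.
Qed.

Lemma inv_succ_lt r : 0 < r -> exists N, inv_succ N < r.
Proof.
  intros Hr; destruct (archimed_cor1 r Hr) as [N [HN HN0]]; exists N; unfold inv_succ.
  apply Rle_lt_trans with (/ INR N); [|exact HN].
  apply Rinv_le_contravar; [apply lt_0_INR; lia | lra].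
Qed.

Lemma minimizing_sequence {X : Type} (g : X -> R) (x0 : X) (lb : R) :
  (forall y, lb <= g y) ->
  exists m (u : nat -> X), (forall y, m <= g y) /\ forall n, g (u n) < m + inv_succ n.
Proof.
  intros Hlb.
  destruct (completeness (fun r => exists y, r = - g y)) as [s [Hub Hleast]].
  { exists (- lb); intros r [y ->]; specialize (Hlb y); lra. }
  { exists (- g x0); eauto. }
  assert (Hinf : forall y, - s <= g y).
  { intros y; assert (- g y <= s) by (apply Hub; eauto); lra. }
  assert (Happrox : forall n, exists y, g y < - s + inv_succ n).
  { intros n; apply NNPP; intros Hnone.
    assert (s <= s - inv_succ n); [|pose proof (inv_succ_pos n); lra].
    apply Hleast; intros r [y ->].
    destruct (Rlt_le_dec (g y) (- s + inv_succ n)); [exfalso; eauto | lra]. }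
  destruct (functional_choice _ Happrox) as [u Hu].
  exists (- s), u; split; assumption.
Qed.

Lemma bounded_seq_cluster (a : nat -> R) (lo hi : R) :
  (forall n, lo <= a n <= hi) ->
  exists l, forall k, exists p, (k <= p)%nat /\ Rabs (a p - l) < inv_succ k.
Proof.
  intros Hb.
  destruct (Bolzano_Weierstrass a _ (compact_P3 lo hi) Hb) as [l Hl].
  exists l; intros k.
  apply (Hl (disc l (mkposreal _ (inv_succ_pos k)))).
  exists (mkposreal _ (inv_succ_pos k)); intros y Hy; exact Hy.
Qed.

Section MetricSpace.

Variables (X : Type) (d : X -> X -> R).
Hypothesis Hd : is_metric d.

Lemma cauchy_of_sq_dist_le (u : nat -> X) (C : R) :
  0 <= C -> (forall n k, d (u n) (u k) ^ 2 <= C * (inv_succ n + inv_succ k)) ->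
  is_cauchy d u.
Proof.
  intros HC Hu eps Heps.
  set (q := eps ^ 2 / (2 * C + 2)).
  assert (Hq : q * (2 * C + 2) = eps ^ 2) by (unfold q; field; lra).
  assert (Hq0 : 0 < q) by (unfold q; apply Rdiv_lt_0_compat; nra).
  destruct (inv_succ_lt q Hq0) as [N HN]; exists N; intros m n Hm Hn.
  pose proof (inv_succ_le _ _ Hm); pose proof (inv_succ_le _ _ Hn).
  assert (C * (inv_succ m + inv_succ n) <= C * (2 * q)) by (apply Rmult_le_compat_l; lra).
  pose proof (Hu m n); pose proof (proj1 Hd (u m) (u n)); nra.
Qed.

Lemma lsc_add (g h : X -> R) : lsc d g -> lsc d h -> lsc d (fun y => g y + h y).
Proof.
  intros Hg Hh y0 eps Heps.
  destruct (Hg y0 (eps / 2)) as [d1 [Hd1 H1]]; [lra|].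
  destruct (Hh y0 (eps / 2)) as [d2 [Hd2 H2]]; [lra|].
  exists (Rmin d1 d2); split; [now apply Rmin_pos|].
  intros y Hy; pose proof (Rmin_l d1 d2); pose proof (Rmin_r d1 d2).
  specialize (H1 y ltac:(lra)); specialize (H2 y ltac:(lra)); lra.
Qed.

Lemma lsc_dist_sq_div (x : X) (c : R) : 0 < c -> lsc d (fun y => d x y ^ 2 / c).
Proof.
  destruct Hd as [Hpos [_ [Hsym Htri]]].
  intros Hc y0 eps Heps.
  set (a := d x y0); assert (Ha : 0 <= a) by apply Hpos.
  exists (eps * c / (2 * a + 1)); split; [apply Rdiv_lt_0_compat; nra|].
  intros y Hy; set (b := d x y); set (eta := d y0 y) in Hy.
  assert (Hdelta : eps * c / (2 * a + 1) * (2 * a + 1) = eps * c) by (field; lra).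
  assert (a <= b + eta) by (unfold a, b, eta; rewrite (Hsym y0 y); apply Htri).
  assert (0 <= b) by apply Hpos.
  assert (Hsq : a ^ 2 - b ^ 2 < eps * c).
  { destruct (Rle_lt_dec a b); [nra|].
    assert (eta * (2 * a + 1) < eps * c / (2 * a + 1) * (2 * a + 1))
      by (apply Rmult_lt_compat_r; lra).
    nra. }
  apply Rmult_lt_reg_r with c; [exact Hc|].
  unfold Rdiv; rewrite Rmult_minus_distr_r, !Rmult_assoc, Rinv_l by lra; lra.
Qed.

Lemma lsc_limit_le (g : X -> R) (u : nat -> X) (l : X) (m : R) :
  lsc d g -> converges_to d u l -> (forall n, g (u n) < m + inv_succ n) -> g l <= m.
Proof.
  intros Hg Hul Hu; destruct (Rle_lt_dec (g l) m) as [|Hlt]; [assumption|exfalso].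
  destruct (Hg l ((g l - m) / 2)) as [delta [Hdelta Hnear]]; [lra|].
  destruct (Hul delta Hdelta) as [N1 HN1].
  destruct (inv_succ_lt ((g l - m) / 2)) as [N2 HN2]; [lra|].
  set (n := max N1 N2).
  assert (Hn : d l (u n) < delta)
    by (rewrite (proj1 (proj2 (proj2 Hd))); apply HN1; lia).
  pose proof (Hnear _ Hn); pose proof (Hu n); pose proof (inv_succ_le N2 n ltac:(lia)).
  lra.
Qed.

Lemma complete_lsc_attains_min (g : X -> R) (u : nat -> X) (m : R) :
  complete d -> lsc d g -> (forall y, m <= g y) -> is_cauchy d u ->
  (forall n, g (u n) < m + inv_succ n) -> exists z, forall w, g z <= g w.
Proof.
  intros Hcomp Hg Hm Hcauchy Hu; destruct (Hcomp u Hcauchy) as [l Hl].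
  exists l; intros w; pose proof (lsc_limit_le g u l m Hg Hl Hu); pose proof (Hm w); lra.
Qed.

Lemma cat0_midpoint (x y z : X) (gamma : R -> X) :
  CAT0 d -> min_geodesic d y z gamma ->
  d x (gamma (/ 2)) ^ 2 <= / 2 * d x y ^ 2 + / 2 * d x z ^ 2 - / 4 * d y z ^ 2.
Proof.
  intros [_ Hcat] Hg; specialize (Hcat x y z gamma Hg (/ 2) ltac:(lra)).
  replace (/ 4) with ((1 - / 2) * / 2) by field.
  replace (/ 2 * d x y ^ 2) with ((1 - / 2) * d x y ^ 2) by field.
  exact Hcat.
Qed.

(* Compare f y with f at the point of the geodesic from x to y at distance delta/2 from x,
   where lower semicontinuity at x bounds f below. *)
Lemma lambda_convex_quadratic_minorant (f : X -> R) (lam : R) (x : X) :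
  geodesic_space d -> lsc d f -> lambda_convex d lam f -> lam <= 0 ->
  exists a b, forall y, b - a * d x y + lam / 2 * d x y ^ 2 <= f y.
Proof.
  intros Hgeo Hf Hlc Hlam.
  destruct (Hf x 1 ltac:(lra)) as [delta [Hdelta Hnear]].
  exists (2 / delta), (f x - 1); intros y.
  set (D := d x y); assert (HD : 0 <= D) by apply Hd.
  destruct (Rlt_le_dec D delta) as [Hclose|Hfar].
  { specialize (Hnear y Hclose).
    assert (0 <= 2 / delta * D) by (apply Rmult_le_pos; [apply Rlt_le, Rdiv_lt_0_compat|]; lra).
    assert (lam / 2 * D ^ 2 <= 0) by (unfold Rdiv; nra).
    lra. }
  destruct (Hgeo x y) as [gamma Hgamma].
  pose proof Hgamma as [Hg0 [_ Hgd]].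
  set (t := delta / (2 * D)).
  assert (HtD : t * D = delta / 2) by (unfold t; field; lra).
  assert (Hta : t * (2 / delta) * D = 1) by (unfold t; field; lra).
  assert (Ht : 0 < t <= / 2).
  { unfold t; split; [apply Rdiv_lt_0_compat; lra|].
    apply Rmult_le_reg_r with (2 * D); [lra|]; unfold Rdiv; field_simplify; lra. }
  assert (Hxt : d x (gamma t) < delta).
  { pose proof (Hgd 0 t ltac:(lra) ltac:(lra)) as E; rewrite Hg0 in E.
    rewrite E, Rminus_0_r, Rabs_pos_eq by lra; fold D; lra. }
  pose proof (Hnear _ Hxt) as Hft.
  pose proof (Hlc x y gamma Hgamma t ltac:(lra)) as Hconv; fold D in Hconv.
  assert (Hcorr : 0 <= - lam / 2 * (t * t * D ^ 2)) by (apply Rmult_le_pos; nra).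
  assert (Hscaled : t * (f x - 1 - 2 / delta * D + lam / 2 * D ^ 2) <= t * f y)
    by (unfold Rdiv in *; nra).
  apply Rmult_le_reg_l with t; lra.
Qed.

End MetricSpace.

Definition prox_obj {X : Type} (d : X -> X -> R) (f : X -> R) (tau : R) (x y : X) : R :=
  f y + d x y ^ 2 / (2 * tau).

Section ProximalPoint.

Variables (X : Type) (d : X -> X -> R) (f : X -> R) (x : X) (tau : R).
Hypotheses (Hd : is_metric d) (Hcat : CAT0 d) (Htau : 0 < tau).

Local Notation g := (prox_obj d f tau x).

Lemma lsc_prox_obj : lsc d f -> lsc d g.
Proof.
  intros Hf; apply (lsc_add X d _ _ Hf), (lsc_dist_sq_div X d Hd x); lra.
Qed.

Lemma prox_obj_ge_f y : f y <= g y.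
Proof.
  unfold prox_obj; assert (0 <= d x y ^ 2 / (2 * tau)); [|lra].
  apply Rmult_le_pos; [apply pow2_ge_0 | apply Rlt_le, Rinv_0_lt_compat; lra].
Qed.

Lemma sq_dist_le_of_quasi_convex (m : R) (y z : X) :
  quasi_convex d f -> (forall w, m <= g w) ->
  d y z ^ 2 <= 4 * tau * ((g y - m) + (g z - m) + Rabs (f y - f z)).
Proof.
  intros Hq Hm.
  destruct (proj1 Hcat y z) as [gamma Hg].
  pose proof (cat0_midpoint X d x y z gamma Hcat Hg) as Hmid.
  pose proof (Hq y z gamma Hg (/ 2) ltac:(lra)) as Hqc.
  pose proof (Hm (gamma (/ 2))) as Hmp.
  assert (Hmax : Rmax (f y) (f z) <= (f y + f z) / 2 + Rabs (f y - f z) / 2).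
  { unfold Rmax; destruct (Rle_dec (f y) (f z));
      [rewrite Rabs_minus_sym|]; rewrite Rabs_pos_eq; lra. }
  unfold prox_obj, Rdiv in *.
  set (c := / (2 * tau)) in *.
  assert (Hc : c * (2 * tau) = 1) by (unfold c; field; lra).
  assert (0 < c) by (unfold c; apply Rinv_0_lt_compat; lra).
  assert (Hmidc : d x (gamma (/ 2)) ^ 2 * c
                  <= (/ 2 * d x y ^ 2 + / 2 * d x z ^ 2 - / 4 * d y z ^ 2) * c)
    by (apply Rmult_le_compat_r; lra).
  assert (d y z ^ 2 = d y z ^ 2 * c * (2 * tau)) by (rewrite Rmult_assoc, Hc; ring).
  nra.
Qed.

Lemma sq_dist_le_of_lambda_convex (lam m : R) (y z : X) :
  lambda_convex d lam f -> (forall w, m <= g w) ->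
  (lam + / tau) * d y z ^ 2 <= 4 * ((g y - m) + (g z - m)).
Proof.
  intros Hlc Hm.
  destruct (proj1 Hcat y z) as [gamma Hg].
  pose proof (cat0_midpoint X d x y z gamma Hcat Hg) as Hmid.
  pose proof (Hlc y z gamma Hg (/ 2) ltac:(lra)) as Hconv.
  pose proof (Hm (gamma (/ 2))) as Hmp.
  unfold prox_obj, Rdiv in *.
  assert (Hinv : / tau = 2 * / (2 * tau)) by (field; lra).
  rewrite Hinv; set (c := / (2 * tau)) in *.
  assert (0 < c) by (unfold c; apply Rinv_0_lt_compat; lra).
  assert (d x (gamma (/ 2)) ^ 2 * c
          <= (/ 2 * d x y ^ 2 + / 2 * d x z ^ 2 - / 4 * d y z ^ 2) * c)
    by (apply Rmult_le_compat_r; lra).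
  lra.
Qed.

Lemma prox_unique_of_lambda_convex (lam : R) (z z' : X) :
  lambda_convex d lam f -> 0 < lam + / tau ->
  J_tau d f tau x z -> J_tau d f tau x z' -> z' = z.
Proof.
  intros Hlc Hk Hz Hz'.
  assert (Hmin : forall w, g z <= g w) by exact Hz.
  pose proof (sq_dist_le_of_lambda_convex lam (g z) z z' Hlc Hmin) as Hsq.
  assert (g z' <= g z) by exact (Hz' z); pose proof (Hmin z').
  assert (d z z' ^ 2 <= 0) by nra.
  assert (d z z' = 0) by (pose proof (proj1 Hd z z'); nra).
  symmetry; apply (proj1 (proj2 Hd)); assumption.
Qed.

Hypothesis Hcomp : complete d.
Hypothesis Hf : lsc d f.

Lemma prox_exists_of_bounded_below (m0 : R) :
  quasi_convex d f -> (forall y, m0 <= f y) -> exists z, J_tau d f tau x z.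
Proof.
  intros Hq Hm0.
  destruct (minimizing_sequence g x m0) as [m [u [Hm Hu]]].
  { intros y; pose proof (Hm0 y); pose proof (prox_obj_ge_f y); lra. }
  destruct (bounded_seq_cluster (fun n => f (u n)) m0 (m + 1)) as [l Hl].
  { intros n; pose proof (Hu n); pose proof (inv_succ_le_1 n);
      pose proof (prox_obj_ge_f (u n)); pose proof (Hm0 (u n)); lra. }
  destruct (functional_choice _ Hl) as [p Hp].
  set (w := fun k => u (p k)).
  assert (Hw : forall k, g (w k) < m + inv_succ k).
  { intros k; pose proof (Hu (p k)); pose proof (inv_succ_le _ _ (proj1 (Hp k))); unfold w; lra. }
  assert (Hcauchy : is_cauchy d w).
  { apply (cauchy_of_sq_dist_le X d Hd w (8 * tau)); [lra|]; intros n k.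
    pose proof (sq_dist_le_of_quasi_convex m (w n) (w k) Hq Hm).
    assert (Rabs (f (w n) - f (w k)) <= inv_succ n + inv_succ k).
    { pose proof (proj2 (Hp n)); pose proof (proj2 (Hp k)).
      replace (f (w n) - f (w k)) with ((f (u (p n)) - l) - (f (u (p k)) - l)) by (unfold w; ring).
      eapply Rle_trans; [apply Rabs_triang|]; rewrite Rabs_Ropp; lra. }
    pose proof (Hw n); pose proof (Hw k); nra. }
  exact (complete_lsc_attains_min X d Hd g w m Hcomp (lsc_prox_obj Hf) Hm Hcauchy Hw).
Qed.

Lemma prox_exists_unique_of_lambda_convex (lam : R) :
  lam < 0 -> lambda_convex d lam f -> 0 < lam + / tau ->
  exists z, J_tau d f tau x z /\ forall z', J_tau d f tau x z' -> z' = z.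
Proof.
  intros Hlam Hlc Hk.
  destruct (lambda_convex_quadratic_minorant X d Hd f lam x (proj1 Hcat) Hf Hlc
              ltac:(lra)) as [a [b Hab]].
  set (kappa := lam + / tau) in *.
  destruct (minimizing_sequence g x (b - a ^ 2 / (2 * kappa))) as [m [u [Hm Hu]]].
  { intros y; specialize (Hab y); unfold prox_obj.
    set (D := d x y) in *.
    assert (Hinv : D ^ 2 / (2 * tau) = (kappa - lam) / 2 * D ^ 2) by (unfold kappa; field; lra).
    assert (Hgap : kappa * ((kappa / 2 * D ^ 2 - a * D) + a ^ 2 / (2 * kappa))
                   = (kappa * D - a) ^ 2 / 2) by (field; lra).
    assert (0 <= (kappa / 2 * D ^ 2 - a * D) + a ^ 2 / (2 * kappa)).
    { apply Rmult_le_reg_l with kappa; [lra|]; rewrite Hgap, Rmult_0_r.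
      pose proof (pow2_ge_0 (kappa * D - a)); lra. }
    rewrite Hinv; lra. }
  assert (Hcauchy : is_cauchy d u).
  { apply (cauchy_of_sq_dist_le X d Hd u (4 / kappa)).
    { apply Rlt_le, Rdiv_lt_0_compat; lra. }
    intros n k; pose proof (sq_dist_le_of_lambda_convex lam m (u n) (u k) Hlc Hm) as Hsq.
    fold kappa in Hsq; pose proof (Hu n); pose proof (Hu k).
    replace (d (u n) (u k) ^ 2) with (/ kappa * (kappa * d (u n) (u k) ^ 2)) by (field; lra).
    replace (4 / kappa * (inv_succ n + inv_succ k))
      with (/ kappa * (4 * (inv_succ n + inv_succ k))) by (field; lra).
    apply Rmult_le_compat_l; [apply Rlt_le, Rinv_0_lt_compat|]; lra. }
  destruct (complete_lsc_attains_min X d Hd g u m Hcomp (lsc_prox_obj Hf) Hm Hcauchy Hu)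
    as [z Hz].
  exists z; split; [exact Hz|].
  intros z' Hz'; exact (prox_unique_of_lambda_convex lam z z' Hlc Hk Hz Hz').
Qed.

End ProximalPoint.

Theorem mainTheorem11 (X : Type) (d : X -> X -> R) (f : X -> R) :
  is_metric d -> complete d -> CAT0 d ->
  lsc d f -> quasi_convex d f ->
  ((exists m, forall y, m <= f y) ->
     forall x tau, 0 < tau -> exists z, J_tau d f tau x z) /\
  (forall lam, lam < 0 -> lambda_convex d lam f ->
     forall x tau, 0 < tau -> tau < / (- lam) ->
       exists z, J_tau d f tau x z /\ forall z', J_tau d f tau x z' -> z' = z).
Proof.
  intros Hd Hcomp Hcat Hf Hq; split.
  - intros [m0 Hm0] x tau Htau.
    exact (prox_exists_of_bounded_below X d f x tau Hd Hcat Htau Hcomp Hf m0 Hq Hm0).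
  - intros lam Hlam Hlc x tau Htau Hsmall.
    apply (prox_exists_unique_of_lambda_convex X d f x tau Hd Hcat Htau Hcomp Hf lam Hlam Hlc).
    assert (/ / (- lam) < / tau) by (apply Rinv_lt_contravar; [apply Rmult_lt_0_compat|]; lra).
    rewrite Rinv_inv in *; lra.
Qed.
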